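(* Let $Q$ be a QNP, let $P=T_D(Q)$ be its direct translation, and let $\pi$ be a policy for $Q$ (and thus also for $P$). Then $\pi$ is $Q$-terminating if and only if $\pi$ is $P$-terminating.
   Context: A qualitative numerical problem (QNP) is a tuple $Q=\langle F,V,I,O,G\rangle$ where $F$ is a finite set of propositional variables and $V$ a finite set of numerical variables taking non-negative real values. $F$-literals are $p,\neg p$; $V$-literals are $X=0$ and $X>0$. Each action $a\in O$ has a precondition $Pre(a)$ (set of literals), propositional effects $\mathit{Eff}(a)$ (set of $F$-literals) and numerical effects $N(a)$ (atoms $Inc(X)$, $Dec(X)$, at most one per variable); if $Dec(X)\in N(a)$ then $X>0\in Pre(a)$. A state $s$ assigns truth values to $F$ and reals $s[X]\ge0$ to $V$; initial states satisfy $I$ under a closed-world assumption; goal states satisfy $G$. For applicable $a$ (i.e. $s$ satisfies $Pre(a)$), $s'\in F(a,s)$ iff the propositional effects are applied (others unchanged), $s'[X]>s[X]$ if $Inc(X)\in N(a)$, $s'[X]<s[X]$ if $Dec(X)\in N(a)$, $s'[X]=s[X]$ otherwise. A trajectory is a sequence $s_0,a_0,s_1,\dots$ with $s_0$ initial, $a_i$ applicable, $s_{i+1}\in F(a_i,s_i)$, that for some $\epsilon>0$ satisfies: for all $X,i$, $s_{i+1}[X]\ne s_i[X]$ implies $|s_{i+1}[X]-s_i[X]|\ge\epsilon$ or $0=s_{i+1}[X]<s_i[X]<\epsilon$. The boolean state $\bar s$ is the truth valuation on atoms $p\in F$ and $X=0$. A policy is a partial map $\pi$ from states to actions with $\pi(s)=\pi(s')$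 when $\bar s=\bar s'$; a $\pi$-trajectory has $a_i=\pi(s_i)$. $\pi$ is $Q$-terminating iff all $\pi$-trajectories of $Q$ are finite. $T_D(Q)$ is the FOND problem over $F\cup\{p_{X=0}:X\in V\}$ obtained by reading $X=0$ as $p_{X=0}$, $X>0$ as $\neg p_{X=0}$ in $I$, $G$, preconditions, keeping propositional effects, replacing $Inc(X)$ by the deterministic effect $\neg p_{X=0}$ and $Dec(X)$ by the nondeterministic effect $\neg p_{X=0}\mid p_{X=0}$; its states are the boolean states and $\pi$ acts via $\bar s\mapsto\pi(s)$. A $\pi$-trajectory of $T_D(Q)$ is a sequence from its initial state with $\pi(\bar s_i)$ applicable and $\bar s_{i+1}$ a possible successor. $Dec(X)$/$Inc(X)$ actions of $T_D(Q)$ are those coming from actions of $Q$ with $Dec(X)$/$Inc(X)$ in $N(a)$. An infinite $\pi$-trajectory of $T_D(Q)$ is terminating if there is $X\in V$ such that $\pi(\bar s)$ is a $Dec(X)$ action for some state $\bar s$ occurring infinitely often and $\pi(\bar s')$ is not an $Inc(X)$ action for any state $\bar s'$ occurring infinitely often. $\pi$ is $P$-terminating iff all infinite $\pi$-trajectories of $P=T_D(Q)$ are terminating. *)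

From mathcomp Require Import all_boot.
From Stdlib Require Import Reals.

Set Implicit Arguments.
Unset Strict Implicit.
Unset Printing Implicit Defensive.

Inductive neff := NNone | NInc | NDec.

(* A QNP  Q = <F, V, I, O, G>  with F = Fv, V = Vv (finite), O = Act (finite).
   A (consistent) set of F-literals is encoded as  Fv -> option bool
   (Some true = p, Some false = ~p, None = not mentioned);
   a set of V-literals as  Vv -> option bool
   (Some true = "X = 0", Some false = "X > 0", None = not mentioned). *)
Record qnp (Fv Vv Act : finType) := Qnp {
  initF : Fv -> option bool;
  initV : Vv -> option bool;
  goalF : Fv -> option bool;
  goalV : Vv -> option bool;
  preF  : Act -> Fv -> option bool;
  preV  : Act -> Vv -> option bool;
  effF  : Act -> Fv -> option bool;
  numN  : Act -> Vv -> neff;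
  dec_pre : forall a X, numN a X = NDec -> preV a X = Some false
}.

Section QNP.
Variables (Fv Vv Act : finType) (Q : qnp Fv Vv Act).

(* states of Q: truth values for F and reals for V (non-negativity is
   required of every state occurring in a trajectory, see qstate_ok) *)
Definition qstate := ((Fv -> bool) * (Vv -> R))%type.
Definition qstate_ok (s : qstate) : Prop := forall X, Rle 0%R (s.2 X).

(* boolean states: valuation of the atoms p in F and p_{X=0} for X in V *)
Definition bstate := ((Fv -> bool) * (Vv -> bool))%type.

Definition bar (s : qstate) : bstate :=
  (s.1, fun X => if Req_dec_T (s.2 X) 0%R then true else false).

(* policies: partial maps on states depending only on the boolean state;
   represented by their (well-defined) action on boolean states *)
Definition policy := bstate -> option Act.

(* the initial boolean state, from I under the closed-world assumption *)
Definition init_bstate : bstate :=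
  (fun p => initF Q p == Some true, fun X => initV Q X == Some true).

Definition q_initial (s : qstate) : Prop := bar s = init_bstate.

Definition q_applicable (a : Act) (s : qstate) : Prop :=
  (forall p b, preF Q a p = Some b -> s.1 p = b) /\
  (forall X b, preV Q a X = Some b -> (if b then s.2 X = 0%R else Rlt 0%R (s.2 X))).

Definition q_succ (a : Act) (s s' : qstate) : Prop :=
  (forall p, s'.1 p = match effF Q a p with Some b => b | None => s.1 p end) /\
  (forall X, match numN Q a X with
             | NInc => Rlt (s.2 X) (s'.2 X)
             | NDec => Rlt (s'.2 X) (s.2 X)
             | NNone => s'.2 X = s.2 X
             end).

Definition eps_cond (s : nat -> qstate) : Prop :=
  exists eps, Rlt 0%R eps /\
    forall X i, (s i.+1).2 X <> (s i).2 X ->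
      Rle eps (Rabs (Rminus ((s i.+1).2 X) ((s i).2 X))) \/
      (0%R = (s i.+1).2 X /\ Rlt ((s i.+1).2 X) ((s i).2 X) /\ Rlt ((s i).2 X) eps).

Definition q_pi_traj_inf (pi : policy) (s : nat -> qstate) : Prop :=
  q_initial (s 0) /\ (forall i, qstate_ok (s i)) /\
  (forall i, exists a, pi (bar (s i)) = Some a /\
                       q_applicable a (s i) /\ q_succ a (s i) (s i.+1)) /\
  eps_cond s.

Definition Q_terminating (pi : policy) : Prop :=
  ~ exists s, q_pi_traj_inf pi s.

Definition td_init : bstate := init_bstate.

Definition td_applicable (a : Act) (t : bstate) : Prop :=
  (forall p b, preF Q a p = Some b -> t.1 p = b) /\
  (forall X b, preV Q a X = Some b -> t.2 X = b).

Definition td_succ (a : Act) (t t' : bstate) : Prop :=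
  (forall p, t'.1 p = match effF Q a p with Some b => b | None => t.1 p end) /\
  (forall X, match numN Q a X with
             | NInc => t'.2 X = false
             | NDec => t'.2 X = false \/ t'.2 X = true
             | NNone => t'.2 X = t.2 X
             end).

Definition p_pi_traj_inf (pi : policy) (t : nat -> bstate) : Prop :=
  t 0 = td_init /\
  (forall i, exists a, pi (t i) = Some a /\
                       td_applicable a (t i) /\ td_succ a (t i) (t i.+1)).

Definition inf_often (t : nat -> bstate) (b : bstate) : Prop :=
  forall n, exists m, (n <= m)%coq_nat /\ t m = b.

Definition is_dec_action (X : Vv) (a : Act) : Prop := numN Q a X = NDec.
Definition is_inc_action (X : Vv) (a : Act) : Prop := numN Q a X = NInc.

Definition terminating_traj (pi : policy) (t : nat -> bstate) : Prop :=
  exists X,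
    (exists b a, inf_often t b /\ pi b = Some a /\ is_dec_action X a) /\
    (forall b' a', inf_often t b' -> pi b' = Some a' -> ~ is_inc_action X a').

Definition P_terminating (pi : policy) : Prop :=
  forall t, p_pi_traj_inf pi t -> terminating_traj pi t.

End QNP.

(* A Q-trajectory projects through [bar] onto a P-trajectory with the same
   actions.  If P terminates, some X is decremented at a state visited
   infinitely often while, the boolean states being finitely many, X is
   eventually never incremented; then every later decrement lowers X by at
   least eps (a decrement to 0 would be the last one), which is impossible
   for a non-negative quantity.  Conversely, given a non-terminating
   P-trajectory, for every X either increments of X recur or decrements of X
   stop, so from any point on only finitely many decrements precede the next
   increment.  Counting them yields a natural-number value for X that moves
   in the direction of every effect and vanishes exactly where p_{X=0} holds;
   natural numbers differ by at least 1, so eps = 1 witnesses the epsilon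
   condition of the resulting infinite Q-trajectory. *)
From mathcomp Require Import all_boot zify.
From Stdlib Require Import Reals Lra Classical ClassicalEpsilon FunctionalExtensionality.

Definition inf_many (P : nat -> Prop) : Prop := forall n, exists2 m, n <= m & P m.

Lemma not_inf_many (P : nat -> Prop) :
  ~ inf_many P -> exists N, forall m, N <= m -> ~ P m.
Proof.
move=> notP; apply: NNPP => noN; apply: notP => n.
apply: NNPP => nomore; apply: noN; exists n => m nm Pm; apply: nomore; by exists m.
Qed.

Lemma inf_oftenP (Fv Vv : finType) (t : nat -> bstate Fv Vv) (b : bstate Fv Vv) :
  inf_often t b <-> inf_many (fun m => t m = b).
Proof.
split=> rec n.
- by have [m [/leP nm tm]] := rec n; exists m.
- by have [m nm tm] := rec n; exists m; split=> //; apply/leP.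
Qed.

Lemma inf_many_pigeonhole (T : Type) (fT : finType) (code : T -> fT)
    (h : nat -> T) (P : nat -> Prop) :
  injective code -> inf_many P -> exists x, inf_many (fun m => P m /\ h m = x).
Proof.
move=> code_inj manyP.
suff [y many_y] : exists y, inf_many (fun m => P m /\ code (h m) = y).
  have [m0 _ [_ hm0]] := many_y 0.
  exists (h m0) => n; have [m nm [Pm hm]] := many_y n.
  by exists m => //; split=> //; apply: code_inj; rewrite hm hm0.
apply: NNPP => none.
have bound y : exists N, forall m, N <= m -> ~ (P m /\ code (h m) = y).
  by apply: not_inf_many => many_y; apply: none; exists y.
have [N HN] := choice _ bound.
have [m Nm Pm] := manyP (\max_y N y).
exact: (HN (code (h m)) m (leq_trans (leq_bigmax _) Nm)).
Qed.

Definition bstate_code (Fv Vv : finType) (b : bstate Fv Vv) :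
  {ffun Fv -> bool} * {ffun Vv -> bool} := (finfun b.1, finfun b.2).

Lemma bstate_code_inj (Fv Vv : finType) : injective (@bstate_code Fv Vv).
Proof.
move=> [f g] [f' g'] [/ffunP eq_f /ffunP eq_g].
congr pair; apply: functional_extensionality => x.
- by have := eq_f x; rewrite !ffunE.
- by have := eq_g x; rewrite !ffunE.
Qed.

Lemma no_eps_descent (u : nat -> R) (eps : R) (N : nat) :
  (0 < eps)%R -> (forall m, 0 <= u m)%R ->
  (forall m, (N <= m)%nat -> u m.+1 <= u m)%R ->
  (forall m, u m.+1 < u m -> u m.+1 <= u m - eps \/ u m.+1 = 0)%R ->
  inf_many (fun m => u m.+1 < u m)%R -> False.
Proof.
move=> eps_gt0 u_ge0 u_noninc u_step u_desc.
have u_mono m d : N <= m -> (u (m + d)%nat <= u m)%R.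
  move=> Nm; elim: d => [|d IH]; rewrite ?addn0 ?addnS; first lra.
  have := u_noninc (m + d) (leq_trans Nm (leq_addr _ _)); lra.
have drop_eps m : N <= m -> (u m.+1 < u m)%R -> (u m.+1 <= u m - eps)%R.
  move=> Nm desc; case: (u_step m desc) => // u0.
  have [m' mm' desc'] := u_desc m.+1.
  have := u_mono m.+1 (m' - m.+1) (leq_trans Nm (leqnSn _)).
  rewrite subnKC // u0 => u_le0; have := u_ge0 m'.+1; lra.
have sink K : exists2 m, N <= m & (u m <= u N - INR K * eps)%R.
  elim: K => [|K [m Nm HK]]; first by exists N => //=; lra.
  have [m' mm' desc] := u_desc m.
  have := drop_eps m' (leq_trans Nm mm') desc.
  have := u_mono m (m' - m) Nm; rewrite subnKC // => le1 le2.
  exists m'.+1; first by rewrite (leq_trans Nm) // ltnW.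
  by rewrite S_INR Rmult_plus_distr_r Rmult_1_l; lra.
have [K HK] := INR_archimed eps (u N) eps_gt0.
have [m _ Hm] := sink K; have := u_ge0 m; lra.
Qed.

Definition isinc (e : neff) : bool := if e is NInc then true else false.
Definition isdec (e : neff) : bool := if e is NDec then true else false.

Lemma isincP (e : neff) : reflect (e = NInc) (isinc e).
Proof. by case: e; constructor. Qed.

Section EffectSequences.
Variable k : nat -> neff.

Definition follows (v : nat -> nat) : Prop :=
  forall i, match k i with
            | NNone => v i.+1 = v i
            | NInc => v i < v i.+1
            | NDec => v i.+1 < v i
            end.

Definition zero_compatible (z : nat -> bool) : Prop :=
  forall i, match k i with
            | NNone => z i.+1 = z i
            | NInc => z i.+1 = false
            | NDec => z i = false
            end.

(* Adding the number of earlier increments makes every increment strict. *)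
Lemma follows_of_dec_potential (f : nat -> nat) :
  (forall i, ~~ isinc (k i) -> f i = isdec (k i) + f i.+1) ->
  (forall i, isinc (k i) -> f i <= f i.+1) ->
  exists v, follows v.
Proof.
move=> f_step f_inc; exists (fun i => \sum_(m < i) isinc (k m) + f i) => i.
rewrite big_ord_recr /=; move: (f_step i) (f_inc i).
by case: (k i) => /= fS fI; [rewrite fS | have := fI isT | rewrite fS]; lia.
Qed.

Lemma follows_of_inf_many_inc : inf_many (fun m => k m = NInc) -> exists v, follows v.
Proof.
move=> incs.
have next_ex i : exists m, (i <= m) && isinc (k m).
  by have [m im /isincP km] := incs i; exists m; rewrite im.
pose next i := ex_minn (next_ex i).
have next_at_inc i : isinc (k i) -> next i = i.
  rewrite /next => ki; case: ex_minnP => n /andP [ni _] min.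
  by apply/eqP; rewrite eqn_leq ni min // leqnn.
have next_S i : ~~ isinc (k i) -> i < next i /\ next i.+1 = next i.
  rewrite /next => ki; case: ex_minnP => n /andP [ni kn] min.
  have i_lt_n : i < n by rewrite ltn_neqAle ni andbT; apply: contraNneq ki => ->.
  split=> //; case: ex_minnP => n' /andP [in' kn'] min'.
  by apply/eqP; rewrite eqn_leq min' ?i_lt_n // min // ltnW.
apply: (@follows_of_dec_potential (fun i => \sum_(i <= m < next i) isdec (k m))).
- by move=> i ki; have [lt ->] := next_S i ki; rewrite big_ltn.
- by move=> i ki; rewrite next_at_inc // big_geq.
Qed.

Lemma follows_of_eventually_no_dec (N : nat) :
  (forall m, N <= m -> k m <> NDec) -> exists v, follows v.
Proof.
move=> nodec; pose f i := \sum_(i <= m < N) isdec (k m).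
have f_step i : f i = isdec (k i) + f i.+1.
  rewrite /f; case: (ltnP i N) => [iN | Ni]; first by rewrite big_ltn.
  by rewrite !big_geq ?(leq_trans Ni) //; case: (k i) (nodec i Ni).
apply: (@follows_of_dec_potential f) => i ki; first exact: f_step.
by rewrite [f i]f_step; case: (k i) ki.
Qed.

Lemma follows_with_zeros (z : nat -> bool) :
  zero_compatible z -> (exists h, follows h) ->
  exists v, follows v /\ forall i, (v i == 0) = z i.
Proof.
move=> zc [h fh]; exists (fun i => if z i then 0 else (h i).+1); split; last first.
  by move=> i; case: (z i).
move=> i; move: (zc i) (fh i).
by case: (k i) => [-> -> | -> | ->] // lt_h; case: (z _).
Qed.

End EffectSequences.

Lemma INR_dist_ge1 (a b : nat) : a <> b -> (1 <= Rabs (INR a - INR b))%R.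
Proof.
move=> neq_ab; case: (ltngtP a b) => [lt_ab | lt_ba |] //.
- have := le_INR _ _ (ltP lt_ab); rewrite S_INR => le_ab.
  rewrite Rabs_left; lra.
- have := le_INR _ _ (ltP lt_ba); rewrite S_INR => le_ba.
  rewrite Rabs_right; lra.
Qed.

Section Translation.
Variables (Fv Vv Act : finType) (Q : qnp Fv Vv Act) (pi : policy Fv Vv Act).

Lemma td_applicable_bar (a : Act) (s : qstate Fv Vv) :
  qstate_ok s -> q_applicable Q a s -> td_applicable Q a (bar s).
Proof.
move=> s_ok [preF_s preV_s]; split=> // X b /preV_s /=.
by case: b; case: Req_dec_T => // *; lra.
Qed.

Lemma td_succ_bar (a : Act) (s s' : qstate Fv Vv) :
  qstate_ok s -> q_succ Q a s s' -> td_succ Q a (bar s) (bar s').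
Proof.
move=> s_ok [effF_s numN_s]; split=> // X /=; move: (numN_s X) (s_ok X).
case: (numN Q a X) => [-> | lt_s s_ge0 | _ _] //; case: Req_dec_T; auto.
by move=> s'0; lra.
Qed.

Lemma bar_nat (f : Fv -> bool) (v : Vv -> nat) :
  bar (f, fun X => INR (v X)) = (f, fun X => v X == 0).
Proof.
congr pair; apply: functional_extensionality => X /=.
case: Req_dec_T => [v0 | v_neq0]; apply/esym.
- by apply/eqP; apply: (INR_eq _ 0).
- by apply/eqP => v0; apply: v_neq0; rewrite v0.
Qed.

Section Actions.
Variables (t : nat -> bstate Fv Vv) (A : nat -> Act).
Hypothesis piA : forall m, pi (t m) = Some (A m).

Lemma inf_many_action_of_recurrent (b : bstate Fv Vv) (a : Act) :
  inf_often t b -> pi b = Some a -> inf_many (fun m => A m = a).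
Proof.
move=> /inf_oftenP rec_b pi_b n; have [m nm tm] := rec_b n.
by exists m => //; apply: Some_inj; rewrite -piA tm.
Qed.

Lemma eventually_not_of_recurrent (R : Act -> Prop) :
  (forall b a, inf_often t b -> pi b = Some a -> ~ R a) ->
  exists N, forall m, N <= m -> ~ R (A m).
Proof.
move=> noR; apply: not_inf_many => many_R.
have [b many_b] := @inf_many_pigeonhole _ _ _ t _ (@bstate_code_inj _ _) many_R.
have [m _ [Rm tm]] := many_b 0.
apply: (noR b (A m)) => //; last by rewrite -tm piA.
by apply/inf_oftenP => n; have [m' nm' [_ tm']] := many_b n; exists m'.
Qed.

Lemma inc_often_or_dec_finite (X : Vv) :
  ~ terminating_traj Q pi t ->
  inf_many (fun m => numN Q (A m) X = NInc) \/
  exists N, forall m, N <= m -> numN Q (A m) X <> NDec.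
Proof.
move=> not_term.
case: (classic (exists b a, inf_often t b /\ pi b = Some a /\ is_inc_action Q X a)).
  move=> [b [a [rec_b [pi_b inc_a]]]]; left => n.
  have [m nm Am] := inf_many_action_of_recurrent _ _ rec_b pi_b n.
  by exists m; rewrite // Am.
move=> no_inc; right; apply: (eventually_not_of_recurrent (is_dec_action Q X)).
move=> b a rec_b pi_b dec_a.
apply: not_term; exists X; split; first by exists b, a.
by move=> b' a' rec_b' pi_b' inc_a'; apply: no_inc; exists b', a'.
Qed.

End Actions.

Lemma Q_terminating_of_P_terminating : P_terminating Q pi -> Q_terminating Q pi.
Proof.
move=> P_term [s [s0 [s_ok [s_step [eps [eps_gt0 s_eps]]]]]].
have [A HA] := choice _ s_step.
have piA i : pi (bar (s i)) = Some (A i) by case: (HA i).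
have t_traj : p_pi_traj_inf Q pi (fun i => bar (s i)).
  split=> // i; exists (A i); have [pi_i [app_i succ_i]] := HA i.
  by split; last split; [| apply: td_applicable_bar | apply: td_succ_bar].
have [X [[b [a [rec_b [pi_b dec_a]]]] no_inc]] := P_term _ t_traj.
have [N after_N] := eventually_not_of_recurrent _ _ piA _ no_inc.
apply: (@no_eps_descent (fun m => (s m).2 X) eps N) => // [m | m Nm | m desc | n].
- exact: s_ok.
- have [_ [_ [_ /(_ X)]]] := HA m; move: (after_N m Nm).
  by rewrite /is_inc_action; case: (numN Q (A m) X) => // _ *; lra.
- have /s_eps[| [s'0 _]] : (s m.+1).2 X <> (s m).2 X by lra.
  + by rewrite Rabs_left => *; lra.
  + by right.
- have [m nm Am] := inf_many_action_of_recurrent _ _ piA _ _ rec_b pi_b n.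
  by exists m => //; have [_ [_ [_ /(_ X)]]] := HA m; rewrite Am dec_a.
Qed.

Lemma q_traj_of_counters (t : nat -> bstate Fv Vv) (A : nat -> Act)
    (v : Vv -> nat -> nat) :
  t 0 = td_init Q ->
  (forall i, pi (t i) = Some (A i) /\ td_applicable Q (A i) (t i) /\
             td_succ Q (A i) (t i) (t i.+1)) ->
  (forall X, follows (fun i => numN Q (A i) X) (v X) /\
             forall i, (v X i == 0) = (t i).2 X) ->
  q_pi_traj_inf Q pi (fun i => ((t i).1, fun X => INR (v X i))).
Proof.
move=> t0 t_step v_spec.
have v_follows X := (v_spec X).1; have v_zero X := (v_spec X).2.
have bar_s i : bar ((t i).1, fun X => INR (v X i)) = t i.
  rewrite bar_nat [RHS]surjective_pairing; congr pair.
  by apply: functional_extensionality => X; rewrite v_zero.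
split; first by rewrite /q_initial bar_s t0.
split; first by move=> i X; apply: pos_INR.
split.
  move=> i; exists (A i); rewrite bar_s.
  have [pi_i [[preF_t preV_t] [effF_t _]]] := t_step i.
  split=> //; split; split=> // X; last first.
    move: (v_follows X i) => /=.
    by case: numN => [-> | lt_v | lt_v] //; apply: lt_INR; apply/ltP.
  move=> b /preV_t; rewrite -v_zero /=; case: b => /eqP.
  - by move=> ->.
  - by move=> v_neq0; apply: lt_0_INR; apply/ltP; rewrite lt0n; apply/eqP.
exists 1%R; split; first lra.
by move=> X i v_neq; left; apply: INR_dist_ge1 => v_eq; apply: v_neq; rewrite /= v_eq.
Qed.

Lemma P_terminating_of_Q_terminating : Q_terminating Q pi -> P_terminating Q pi.
Proof.
move=> Q_term t t_traj; apply: NNPP => not_term; apply: Q_term.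
have [t0 t_step] := t_traj; have [A HA] := choice _ t_step.
have piA i : pi (t i) = Some (A i) by case: (HA i).
have counter X : exists v, follows (fun i => numN Q (A i) X) v /\
                           forall i, (v i == 0) = (t i).2 X.
  have zc : zero_compatible (fun i => numN Q (A i) X) (fun i => (t i).2 X).
    move=> i; have [_ [[_ preV_t] [_ /(_ X)]]] := HA i.
    by case E: (numN Q (A i) X) => // _; apply: preV_t (dec_pre E).
  apply: follows_with_zeros zc _.
  case: (inc_often_or_dec_finite _ _ piA X not_term) => [incs | [N nodec]].
  - exact: follows_of_inf_many_inc.
  - exact: follows_of_eventually_no_dec nodec.
have [v v_spec] := choice _ counter.
exists (fun i => ((t i).1, fun X => INR (v X i))).
exact: q_traj_of_counters.
Qed.

End Translation.

Theorem theorem4 (Fv Vv Act : finType) (Q : qnp Fv Vv Act)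
    (pi : policy Fv Vv Act) :
  Q_terminating Q pi <-> P_terminating Q pi.
Proof.
split; [exact: P_terminating_of_Q_terminating | exact: Q_terminating_of_P_terminating].
Qed.
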